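(* Let $n\ge 2$ and let $\zeta_1,\dots,\zeta_{n-1}$ be the positive roots of $U'_{2n-1}$. For each $i$, the value $(SU_{2n-1})(\zeta_i)$, viewed as a polynomial in $x$, vanishes exactly at \[ x=\zeta_i^2-\frac{2}{(2n+1)(2n-1)}. \] Consequently the roots of the Jeff polynomial $J(x)$ are exactly the $n-1$ real numbers $\zeta_i^2-\frac{2}{(2n-1)(2n+1)}$, $i=1,\dots,n-1$.
   Context: $T_m,U_m$ are Chebyshev polynomials: $T_m(\cos\theta)=\cos m\theta$, $U_m(\cos\theta)=\sin((m+1)\theta)/\sin\theta$. For an indeterminate $x$, \[ (SU_{2n-1})(z)=\frac12\int_{-z}^{z}U'_{2n-1}(t)(x-t^2)\,dt=(x-z^2)U_{2n-1}(z)+\frac{T_{2n+1}(z)}{2n+1}+\frac{T_{2n-1}(z)}{2n-1}. \] The Jeff polynomial $J(x)\in\mathbb{Z}[x]$ is the (up to sign unique) integer polynomial with coprime coefficients that is a nonzero real scalar multiple of $\prod_{i=1}^{n-1}(SU_{2n-1})(\zeta_i)$. *)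

From HB Require Import structures.
From mathcomp Require Import all_boot all_order all_algebra.
Set Implicit Arguments. Unset Strict Implicit. Unset Printing Implicit Defensive.
Import Order.TTheory GRing.Theory Num.Theory.
Local Open Scope ring_scope.

(* Chebyshev polynomials via the three-term recurrence:
   T_0 = 1, T_1 = X, T_{m+2} = 2X T_{m+1} - T_m;
   U_0 = 1, U_1 = 2X, U_{m+2} = 2X U_{m+1} - U_m.
   (So T_m(cos t) = cos(m t), U_m(cos t) = sin((m+1)t)/sin t.) *)
Fixpoint cheb_pair {R : nzRingType} (a0 a1 : {poly R}) (m : nat)
  : {poly R} * {poly R} :=
  match m with
  | 0 => (a0, a1)
  | m'.+1 => let p := cheb_pair a0 a1 m' in
             (p.2, 'X *+ 2 * p.2 - p.1)
  end.

Definition chebT {R : nzRingType} (m : nat) : {poly R} := (cheb_pair 1 'X m).1.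
Definition chebU {R : nzRingType} (m : nat) : {poly R} := (cheb_pair 1 ('X *+ 2) m).1.

(* (S U_{2n-1})(z), viewed as a polynomial in the indeterminate x:
   (x - z^2) U_{2n-1}(z) + T_{2n+1}(z)/(2n+1) + T_{2n-1}(z)/(2n-1). *)
Definition SU {R : fieldType} (n : nat) (z : R) : {poly R} :=
  ('X - (z ^+ 2)%:P) * ((chebU (2 * n - 1)).[z])%:P
  + ((chebT (2 * n + 1)).[z] / (2 * n + 1)%:R)%:P
  + ((chebT (2 * n - 1)).[z] / (2 * n - 1)%:R)%:P.

From HB Require Import structures.
From mathcomp Require Import all_boot all_order all_algebra.
From mathcomp Require Import ring zify.
Import Order.TTheory GRing.Theory Num.Theory.
Local Open Scope ring_scope.

(** At a critical point [z] of [U_k] the identity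
    [(1 - X^2) U_k' = X U_k - (k+1) T_{k+1}] gives [(k+1) T_{k+1}(z) = z U_k(z)],
    and expressing [T_{k+2}] and [T_k] through [T_{k+1}] and [U_k] yields
    [T_{k+2}(z)/(k+2) + T_k(z)/k = U_k(z) * 2/(k(k+2))].  With [k = 2n-1] this
    turns [(S U_{2n-1})(z)] into [U_k(z) * (x - z^2 + 2/((2n+1)(2n-1)))], and
    [U_k(z) <> 0] by the Pell identity [T_{k+1}^2 - (X^2-1) U_k^2 = 1].  Hence
    the product defining the Jeff polynomial is a nonzero constant times the
    monic polynomial with the roots [zeta_i^2 - 2/((2n-1)(2n+1))]. *)

Section Chebyshev.
Variable R : comNzRingType.

Lemma chebT0 : chebT 0 = 1 :> {poly R}. Proof. by []. Qed.
Lemma chebT1 : chebT 1 = 'X :> {poly R}. Proof. by []. Qed.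
Lemma chebU0 : chebU 0 = 1 :> {poly R}. Proof. by []. Qed.
Lemma chebU1 : chebU 1 = 'X *+ 2 :> {poly R}. Proof. by []. Qed.

Lemma chebTSS k : chebT k.+2 = 'X *+ 2 * chebT k.+1 - chebT k :> {poly R}.
Proof. by []. Qed.

Lemma chebUSS k : chebU k.+2 = 'X *+ 2 * chebU k.+1 - chebU k :> {poly R}.
Proof. by []. Qed.

Lemma eq_cheb_rec (f g : nat -> {poly R}) :
  (forall k, f k.+2 = 'X *+ 2 * f k.+1 - f k) ->
  (forall k, g k.+2 = 'X *+ 2 * g k.+1 - g k) ->
  f 0 = g 0 -> f 1 = g 1 -> f =1 g.
Proof.
move=> fSS gSS f0 f1 k; suff: f k = g k /\ f k.+1 = g k.+1 by case.
by elim: k => [|k [ek ekS]]; split; rewrite // fSS gSS ek ekS.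
Qed.

Lemma chebT_chebU k : chebT k.+1 = chebU k.+1 - 'X * chebU k :> {poly R}.
Proof.
apply: (@eq_cheb_rec (chebT \o S) (fun k => chebU k.+1 - 'X * chebU k)) => {k}.
- by move=> k; rewrite /= chebTSS.
- by move=> k; rewrite !chebUSS; ring.
- by rewrite /= chebT1 chebU1 chebU0; ring.
- by rewrite /= chebTSS chebUSS chebT1 chebT0 chebU1 chebU0; ring.
Qed.

Lemma chebT_next k :
  chebT k.+2 = 'X * chebT k.+1 - (1 - 'X ^+ 2) * chebU k :> {poly R}.
Proof.
apply: (@eq_cheb_rec (fun k => chebT k.+2)
          (fun k => 'X * chebT k.+1 - (1 - 'X ^+ 2) * chebU k)) => {k}.
- by move=> k; rewrite chebTSS.
- by move=> k; rewrite chebTSS chebUSS; ring.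
- by rewrite chebTSS chebT1 chebT0 chebU0; ring.
- by rewrite !chebTSS chebT1 chebT0 chebU1; ring.
Qed.

Lemma chebT_prev k :
  chebT k = 'X * chebT k.+1 + (1 - 'X ^+ 2) * chebU k :> {poly R}.
Proof.
apply: (@eq_cheb_rec chebT
          (fun k => 'X * chebT k.+1 + (1 - 'X ^+ 2) * chebU k)) => {k}.
- exact: chebTSS.
- by move=> k; rewrite chebTSS chebUSS; ring.
- by rewrite chebT1 chebT0 chebU0; ring.
- by rewrite !chebTSS chebT1 chebT0 chebU1; ring.
Qed.

Lemma chebT_chebU_Pell k :
  chebT k.+1 ^+ 2 - ('X ^+ 2 - 1) * chebU k ^+ 2 = 1 :> {poly R}.
Proof.
elim: k => [|k IH]; first by rewrite chebT1 chebU0; ring.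
have chebUS : chebU k.+1 = chebT k.+1 + 'X * chebU k :> {poly R}.
  by rewrite chebT_chebU; ring.
by rewrite chebT_next chebUS -[RHS]IH; ring.
Qed.

Lemma deriv_chebUSS k :
  (chebU k.+2)^`() = 'X *+ 2 * (chebU k.+1)^`() + chebU k.+1 *+ 2
                     - (chebU k)^`() :> {poly R}.
Proof. by rewrite chebUSS derivB derivM derivMn derivX; ring. Qed.

Lemma deriv_chebU k :
  (1 - 'X ^+ 2) * (chebU k)^`() = 'X * chebU k - chebT k.+1 * k.+1%:R
    :> {poly R}.
Proof.
pose D k : {poly R} :=
  (1 - 'X ^+ 2) * (chebU k)^`() - ('X * chebU k - chebT k.+1 * k.+1%:R).
suff /(_ k)/eqP : D =1 fun=> 0 by rewrite subr_eq0 => /eqP.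
apply: eq_cheb_rec => {k} [k|k||].
- rewrite /D deriv_chebUSS chebUSS (chebTSS k.+1) (chebT_prev k.+1).
  by ring.
- by ring.
- by rewrite /D chebU0 chebT1 derivC; ring.
- by rewrite /D chebU1 chebTSS chebT1 chebT0 derivMn derivX; ring.
Qed.

End Chebyshev.

Section CriticalPoint.
Variables (R : numFieldType) (k : nat) (z : R).
Hypothesis k_gt0 : (0 < k)%N.
Hypothesis crit_z : root (chebU k)^`() z.

Lemma chebT_at_critical : (chebT k.+1).[z] * k.+1%:R = z * (chebU k).[z].
Proof.
have /(congr1 (horner^~ z))/esym := deriv_chebU R k.
rewrite !hornerE hornerMn hornerE (rootP crit_z) mulr0 => /eqP.
by rewrite subr_eq0 => /eqP.
Qed.

Lemma chebU_neq0_at_critical : (chebU k).[z] != 0.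
Proof.
apply/eqP=> Uz0.
have /eqP := chebT_at_critical; rewrite Uz0 mulr0 mulf_eq0 pnatr_eq0 orbF.
move=> /eqP Tz0; have /(congr1 (horner^~ z)) := chebT_chebU_Pell R k.
by rewrite !hornerE Tz0 Uz0 /= expr0n !mulr0 subr0 => /eqP; rewrite eq_sym oner_eq0.
Qed.

Lemma chebT_sum_at_critical :
  (chebT k.+2).[z] / k.+2%:R + (chebT k).[z] / k%:R
    = (chebU k).[z] * (2 / (k.+2%:R * k%:R)).
Proof.
have nk : k%:R != 0 :> R by rewrite pnatr_eq0 -lt0n.
have nk1 : k.+1%:R != 0 :> R by rewrite pnatr_eq0.
have nk2 : k.+2%:R != 0 :> R by rewrite pnatr_eq0.
have Tz : (chebT k.+1).[z] = z * (chebU k).[z] / k.+1%:R.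
  by rewrite -chebT_at_critical mulfK.
rewrite chebT_next (chebT_prev _ k) !hornerE Tz /=.
have k1E : k.+1%:R = 1 + k%:R :> R by rewrite -addn1 natrD addrC.
have k2E : k.+2%:R = 2 + k%:R :> R by rewrite -addn2 natrD addrC.
by rewrite k1E k2E; field; rewrite -k1E -k2E nk nk1 nk2.
Qed.

End CriticalPoint.

Lemma SU_at_critical (R : numFieldType) (n : nat) (z : R) :
  (0 < n)%N -> root (chebU (2 * n - 1))^`() z ->
  SU n z = (chebU (2 * n - 1)).[z]
           *: ('X - (z ^+ 2 - 2 / ((2 * n + 1)%:R * (2 * n - 1)%:R))%:P).
Proof.
move=> n_gt0 crit_z; set k := (2 * n - 1)%N.
have k_gt0 : (0 < k)%N by rewrite /k; lia.
have k2E : (2 * n + 1 = k.+2)%N by rewrite /k; lia.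
rewrite /SU -/k k2E -addrA -polyCD chebT_sum_at_critical // -mul_polyC.
by rewrite polyCB polyCM; ring.
Qed.

Lemma root_SU_at_critical (R : numFieldType) (n : nat) (z x : R) :
  (0 < n)%N -> root (chebU (2 * n - 1))^`() z ->
  root (SU n z) x = (x == z ^+ 2 - 2 / ((2 * n + 1)%:R * (2 * n - 1)%:R)).
Proof.
move=> n_gt0 crit_z; have k_gt0 : (0 < 2 * n - 1)%N by lia.
by rewrite SU_at_critical // rootZ ?chebU_neq0_at_critical // root_XsubC.
Qed.

Theorem mainTheorem3 (R : rcfType) (n : nat) (hn : (2 <= n)%N)
  (zeta : 'I_(n.-1) -> R)
  (zeta_inj : injective zeta)
  (zeta_pos : forall i, 0 < zeta i)
  (zeta_root : forall i, root (chebU (2 * n - 1))^`() (zeta i))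
  (zeta_all : forall z : R, 0 < z -> root (chebU (2 * n - 1))^`() z ->
                exists i, z = zeta i) :
  (forall i (x : R),
     root (SU n (zeta i)) x <->
     x = zeta i ^+ 2 - 2 / ((2 * n + 1)%:R * (2 * n - 1)%:R))
  /\
  (forall (J : {poly int}) (c : R),
     `|zcontents J| = 1 ->
     c != 0 ->
     map_poly intr J = c *: \prod_(i < n.-1) SU n (zeta i) ->
     (forall x : R, root (map_poly intr J) x <->
        exists i, x = zeta i ^+ 2 - 2 / ((2 * n - 1)%:R * (2 * n + 1)%:R))
     /\
     map_poly intr J = (lead_coef (map_poly intr J)) *:
        \prod_(i < n.-1) ('X - (zeta i ^+ 2 - 2 / ((2 * n - 1)%:R * (2 * n + 1)%:R))%:P)).
Proof.
have n_gt0 : (0 < n)%N by lia.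
have k_gt0 : (0 < 2 * n - 1)%N by lia.
split=> [i x|J c _ c_neq0 JE].
  by rewrite root_SU_at_critical //; split=> /eqP.
pose a i := zeta i ^+ 2 - 2 / ((2 * n - 1)%:R * (2 * n + 1)%:R) : R.
pose C := c * \prod_(i < n.-1) (chebU (2 * n - 1)).[zeta i].
have C_neq0 : C != 0.
  by rewrite mulf_neq0 //; apply/prodf_neq0 => i _; exact: chebU_neq0_at_critical.
have {}JE : map_poly intr J = C *: \prod_(i < n.-1) ('X - (a i)%:P).
  rewrite JE -scalerA -scaler_prod; congr (_ *: _); apply: eq_bigr => i _.
  by rewrite SU_at_critical // /a (mulrC (2 * n + 1)%:R).
have lead_J : lead_coef (map_poly intr J) = C.
  by rewrite JE lead_coefZ (monicP (monic_prod_XsubC _ _ _)) mulr1.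
split=> [x|]; last by rewrite lead_J.
have prod_mapE : \prod_(i < n.-1) ('X - (a i)%:P)
                  = \prod_(y <- map a (enum 'I_n.-1)) ('X - y%:P).
  by rewrite big_map big_enum.
rewrite JE rootZ // prod_mapE root_prod_XsubC.
split=> [/mapP[i _ ->]|[i ->]]; first by exists i; rewrite /a.
by apply/mapP; exists i; rewrite ?mem_enum.
Qed.
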